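(* If $p$ is prime, then $\operatorname{sf}(p-1)\equiv (p-1)!! \pmod p$.
   Context: For a natural number $n$, the double factorial $n!!$ is the product of the natural numbers less than or equal to $n$ that have the same parity as $n$. The superfactorial is $\operatorname{sf}(n)=\prod_{k=1}^{n} k!$. *)

From mathcomp Require Import all_boot.

Fixpoint dfact (n : nat) : nat :=
  match n with
  | 0 => 1
  | 1 => 1
  | (m.+2) as k => k * dfact m
  end.

Definition superfact (n : nat) : nat := \prod_(1 <= k < n.+1) k`!.

(** Grouping the factorials of sf(2r) in pairs, (2i+1)! (2i+2)! = (2i+2) ((2i+1)!)^2,
    gives sf(2r) = (2r)!! (prod_(i<r) (2i+1)!)^2.  For p = 2r+1, Wilson's theorem
    yields the reflection formula k! (p-1-k)! = (-1)^(k+1) (mod p); the map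
    2i+1 |-> p-1-(2i+1) permutes the odd numbers below p-1, so the square of the
    product of the odd factorials is a product of terms (-1)^(2i+2) = 1. *)

From mathcomp Require Import all_boot all_algebra.
From mathcomp Require Import zify ring.
Import GRing.Theory.

Lemma superfact_double r :
  superfact r.*2 = dfact r.*2 * (\prod_(i < r) (i.*2.+1)`!) ^ 2.
Proof.
elim: r => [|r IHr]; first by rewrite /superfact big_geq // big_ord0.
rewrite /superfact doubleS big_nat_recr // big_nat_recr // -/(superfact r.*2) IHr.
rewrite big_ord_recr /= [(r.*2.+2)`!]factS -/(r.*2.+1)`!.
by ring.
Qed.

Lemma Fp_eqmod p m n : prime p -> (m%:R = n%:R :> 'F_p)%R -> m = n %[mod p].
Proof. by move=> p_pr /(congr1 val); rewrite /= !val_Fp_nat. Qed.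

Section FactorialReflection.
Local Open Scope ring_scope.

Variable p : nat.
Hypothesis p_pr : prime p.

Lemma Fp_fact_reflect k : (k <= p.-1)%N ->
  (k`! * (p.-1 - k)`!)%:R = (-1) ^+ k.+1 :> 'F_p.
Proof.
have p_gt1 : (1 < p)%N := prime_gt1 p_pr.
elim: k => [_ | k IHk le_k1_p1].
  have : (p %| (p.-1)`!.+1)%N by rewrite -Wilson.
  rewrite (dvdn_pcharf (pchar_Fp p_pr)) -natr1 addr_eq0 => /eqP.
  by rewrite fact0 mul1n subn0.
set c := (p.-1 - k)%N.
have c_def : c = (p.-1 - k.+1).+1 by rewrite /c subnSK.
have c_neq0 : c%:R != 0 :> 'F_p.
  by rewrite -(dvdn_pcharf (pchar_Fp p_pr)) gtnNdvd // /c; lia.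
have k1_opp_c : k.+1%:R = - c%:R :> 'F_p.
  apply/eqP; rewrite -addr_eq0 -natrD.
  have -> : (k.+1 + c = p)%N by rewrite /c; lia.
  by rewrite -(dvdn_pcharf (pchar_Fp p_pr)).
apply: (mulIf c_neq0).
have shift : ((k.+1)`! * (p.-1 - k.+1)`! * c = k`! * c`! * k.+1)%N.
  by rewrite factS {2}c_def factS -c_def; ring.
rewrite -natrM shift natrM IHk; last exact: ltnW.
rewrite k1_opp_c.
by rewrite [in RHS]exprS mulN1r mulNr mulrN.
Qed.

Lemma Fp_prod_odd_fact_sqr r : p = r.*2.+1 ->
  ((\prod_(i < r) (i.*2.+1)`!) ^ 2)%:R = 1 :> 'F_p.
Proof.
move=> p_def; rewrite expnS expn1.
rewrite [X in (_ * X)%N](reindex_inj rev_ord_inj) /= -big_split /= natr_prod.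
apply: big1 => i _.
have lt_ir := ltn_ord i.
have -> : (r - i.+1).*2.+1 = (p.-1 - i.*2.+1)%N by rewrite p_def; lia.
rewrite Fp_fact_reflect; last by rewrite p_def; lia.
by rewrite -doubleS -mul2n exprM sqrrN !expr1n.
Qed.

End FactorialReflection.

Theorem theorem5 (p : nat) : prime p ->
  superfact p.-1 = dfact p.-1 %[mod p].
Proof.
move=> p_pr.
have [p_odd | p_even] := boolP (odd p); last first.
  case: (even_prime p_pr) p_even => [-> _ | -> //].
  by rewrite /superfact big_nat1.
set r := p./2.
have p_def : p = r.*2.+1 by rewrite -[LHS](odd_double_half p) p_odd.
have -> : p.-1 = r.*2 by rewrite p_def.
rewrite superfact_double.
have sqr_eq1 : (\prod_(i < r) (i.*2.+1)`!) ^ 2 = 1 %[mod p].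
  by apply: Fp_eqmod => //; apply: Fp_prod_odd_fact_sqr.
by rewrite -modnMmr sqr_eq1 modnMmr muln1.
Qed.
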